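(* Let $(V,\star,\alpha,1)$ be a unital hom-associative algebra of type $I_3$. Then it is also (a) of type $I_2$, (b) of type $II_2$, and (c) of type $II_3$.
   Context: Let $k$ be a commutative ring. A unital hom-associative algebra is a tuple $(V,\star,\alpha,1)$ where $V$ is a $k$-module, $\star:V\times V\to V$ is $k$-bilinear, $\alpha:V\to V$ is $k$-linear, and $1\in V$ satisfies $1\star x=x\star 1=x$ for all $x\in V$. It is of type $T$ if the identity for $T$ holds for all $x,y,z\in V$: $I_2$: $x\star(\alpha(y)\star z)=(x\star\alpha(y))\star z$; $I_3$: $x\star(y\star\alpha(z))=(\alpha(x)\star y)\star z$; $II_2$: $\alpha(x)\star(y\star\alpha(z))=(\alpha(x)\star y)\star\alpha(z)$; $II_3$: $\alpha(x)\star(\alpha(y)\star z)=(x\star\alpha(y))\star\alpha(z)$. *)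

From HB Require Import structures.
From mathcomp Require Import all_boot all_order all_algebra.
Set Implicit Arguments. Unset Strict Implicit. Unset Printing Implicit Defensive.
Import GRing.Theory.
Local Open Scope ring_scope.

Definition bilinear_op (k : comPzRingType) (V : lmodType k) (star : V -> V -> V) : Prop :=
  (forall (a : k) (x y z : V), star (a *: x + y) z = a *: star x z + star y z) /\
  (forall (a : k) (x y z : V), star z (a *: x + y) = a *: star z x + star z y).

Definition linear_map (k : comPzRingType) (V : lmodType k) (alpha : V -> V) : Prop :=
  forall (a : k) (x y : V), alpha (a *: x + y) = a *: alpha x + alpha y.

Definition unital_hom_alg (k : comPzRingType) (V : lmodType k)
  (star : V -> V -> V) (alpha : V -> V) (one : V) : Prop :=
  [/\ bilinear_op star, linear_map alpha &
      forall x : V, star one x = x /\ star x one = x].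

Definition type_I2 (k : comPzRingType) (V : lmodType k) (star : V -> V -> V) (alpha : V -> V) :=
  forall x y z : V, star x (star (alpha y) z) = star (star x (alpha y)) z.
Definition type_I3 (k : comPzRingType) (V : lmodType k) (star : V -> V -> V) (alpha : V -> V) :=
  forall x y z : V, star x (star y (alpha z)) = star (star (alpha x) y) z.
Definition type_II2 (k : comPzRingType) (V : lmodType k) (star : V -> V -> V) (alpha : V -> V) :=
  forall x y z : V, star (alpha x) (star y (alpha z)) = star (star (alpha x) y) (alpha z).
Definition type_II3 (k : comPzRingType) (V : lmodType k) (star : V -> V -> V) (alpha : V -> V) :=
  forall x y z : V, star (alpha x) (star (alpha y) z) = star (star x (alpha y)) (alpha z).

From HB Require Import structures.
From mathcomp Require Import all_boot all_order all_algebra.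

(* A unital hom-associative algebra of type I_3 is also of types I_2, II_2
   and II_3.

   Plugging the unit into I_3 gives the "sliding" rule
   x * a(y) = a(x) * y, and then a(w) = a(1) * w, i.e. the twisting map is
   left multiplication by a(1).  From these, a(a(x) * y) = a(a(x)) * y.
   Each target identity is then obtained by sliding a twisting map across
   a product, applying I_3 once, and sliding back. *)

Section TypeI3.

Variables (k : comPzRingType) (V : lmodType k).
Variables (star : V -> V -> V) (alpha : V -> V) (one : V).
Hypothesis one_mull : forall x : V, star one x = x.
Hypothesis one_mulr : forall x : V, star x one = x.
Hypothesis I3 : type_I3 star alpha.

Lemma alpha_slide (x y : V) : star x (alpha y) = star (alpha x) y.
Proof. by have := I3 x one y; rewrite one_mull one_mulr. Qed.

Lemma alpha_left_mul (w : V) : alpha w = star (alpha one) w.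
Proof. by rewrite -alpha_slide one_mull. Qed.

Lemma alpha_mul_alpha_l (x y : V) :
  alpha (star (alpha x) y) = star (alpha (alpha x)) y.
Proof.
rewrite [alpha (star _ _)]alpha_left_mul -[star (alpha x) y]alpha_slide I3.
by rewrite [alpha (alpha x)]alpha_left_mul alpha_slide.
Qed.

Lemma typeI3_I2 : type_I2 star alpha.
Proof. by move=> x y z; rewrite -alpha_slide I3 alpha_slide. Qed.

Lemma typeI3_II2 : type_II2 star alpha.
Proof. by move=> x y z; rewrite I3 alpha_slide alpha_mul_alpha_l. Qed.

(* (c): via (a); both sides reduce to (a(a(x)) * y) * z. *)
Lemma typeI3_II3 : type_II3 star alpha.
Proof.
move=> x y z.
rewrite typeI3_I2 [star (alpha x) (alpha y)]alpha_slide.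
by rewrite [RHS]alpha_slide [star x (alpha y)]alpha_slide alpha_mul_alpha_l.
Qed.

End TypeI3.

Theorem proposition2p6 (k : comPzRingType) (V : lmodType k)
  (star : V -> V -> V) (alpha : V -> V) (one : V) :
  unital_hom_alg star alpha one -> type_I3 star alpha ->
  type_I2 star alpha /\ type_II2 star alpha /\ type_II3 star alpha.
Proof.
move=> [_ _ unit] I3.
have one_mull x : star one x = x by case: (unit x).
have one_mulr x : star x one = x by case: (unit x).
split; first exact: typeI3_I2 one_mull one_mulr I3.
split; first exact: typeI3_II2 one_mull one_mulr I3.
exact: typeI3_II3 one_mull one_mulr I3.
Qed.
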